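(* There is a universal constant $C_{\mathrm{hg}}>1$ such that the following holds. Let $A$ be an $m_1\times m_2$ random matrix with i.i.d. Bernoulli$(p)$ entries, $p\in(0,1)$, let $\vec b=(b_1,\dots,b_{m_2})\in\{0,1,\dots,m_1\}^{m_2}$, and let $\Omega_{\vec b}(A)$ be the event that $|\mathrm{supp}(\mathbf C_i(A))|=b_i$ for all $i\in[m_2]$. Let $\emptyset\ne J_1\subset J_2\subset[m_2]$ and $r>0$ be such that $|\{j\in J_1:b_j\ge r\}|\ge|J_1|/2$ and $r\ge |J_2|\cdot\frac{24\|\vec b\|_\infty^2}{m_1}$. Then $$\mathbb{P}\Big\{|I_A(J_1,J_2)|<\frac{|J_1|r}{4}\ \Big|\ \Omega_{\vec b}(A)\Big\}\le C_{\mathrm{hg}}^{|J_1|/2}\exp\Big(-\log\Big(\frac{r}{24|J_2|\|\vec b\|_\infty^2/m_1}\Big)\frac{r|J_1|}{8}\Big).$$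
   Context: $\mathbf C_i(A)$ is the $i$-th column of $A$, $\mathrm{supp}$ the set of indices of nonzero entries, $\|\vec b\|_\infty=\max_i b_i$. For $J_1\subset J_2\subset[m_2]$, $I_A(J_1,J_2)=\{i\in[m_1]:\exists j_0\in J_1\text{ with }a_{ij_0}=1\text{ and }a_{ij}=0\text{ for all }j\in J_2\setminus\{j_0\}\}$. Conditioned on $\Omega_{\vec b}(A)$, the columns are independent and the support of column $i$ is uniform among $b_i$-subsets of $[m_1]$. *)

From HB Require Import structures.
From mathcomp Require Import all_boot all_order all_algebra.
From mathcomp Require Import all_classical all_reals all_analysis.
Set Implicit Arguments. Unset Strict Implicit. Unset Printing Implicit Defensive.
Import Order.TTheory GRing.Theory Num.Theory.
Local Open Scope ring_scope.

Definition bern_weight (R : realType) (m1 m2 : nat) (p : R)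
  (A : 'M[bool]_(m1, m2)) : R :=
  \prod_(i : 'I_m1) \prod_(j : 'I_m2) (if A i j then p else 1 - p).

Definition bern_prob (R : realType) (m1 m2 : nat) (p : R)
  (E : pred 'M[bool]_(m1, m2)) : R :=
  \sum_(A | E A) bern_weight p A.

Definition bern_cond_prob (R : realType) (m1 m2 : nat) (p : R)
  (E F : pred 'M[bool]_(m1, m2)) : R :=
  bern_prob p [pred A | E A && F A] / bern_prob p F.

Definition col_supp (m1 m2 : nat) (A : 'M[bool]_(m1, m2)) (i : 'I_m2)
  : {set 'I_m1} := [set k | A k i].

Definition Omega_b (m1 m2 : nat) (b : 'I_m2 -> nat) : pred 'M[bool]_(m1, m2) :=
  [pred A | [forall i, #|col_supp A i| == b i]].

Definition I_A (m1 m2 : nat) (A : 'M[bool]_(m1, m2)) (J1 J2 : {set 'I_m2})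
  : {set 'I_m1} :=
  [set i | [exists j0 in J1, A i j0 && [forall j in J2, (j != j0) ==> ~~ A i j]]].

Definition bmax (m2 : nat) (b : 'I_m2 -> nat) : nat := \max_(i : 'I_m2) b i.

From HB Require Import structures.
From mathcomp Require Import all_boot all_order all_algebra.
From mathcomp Require Import all_classical all_reals all_analysis.
From mathcomp Require Import zify ring lra.
Import Order.TTheory GRing.Theory Num.Theory.
Local Open Scope ring_scope.
Set Implicit Arguments. Unset Strict Implicit. Unset Printing Implicit Defensive.

(* Conditionally on Omega_b all matrices have the same Bernoulli weight, so the
   conditional probability is a ratio of cardinalities (bern_cond_prob_uniform)
   and the columns behave as independent uniform b_j-subsets of [m1]
   (sum_Omega_resample).  Let K be the set of j in J1 with b_j >= r.  For j in K,
   the overlap Y_j(A) counts the ones of column j in rows already covered by the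
   columns of J2 :\: K or by earlier columns of K.  Counting row by row,
       sum_(j in K) b_j <= 2 * sum_(j in K) Y_j + |I_A(J1, J2)|   (sum_col_supp_le),
   so on the bad event the total overlap is at least r |J1| / 8.  Resampling the
   columns of K from the last to the first, each Y_j is hypergeometric given
   the other columns, which bounds the exponential moment lam ^ (sum_j Y_j)
   (hypergeometric_moment, overlap_moment).  Markov's inequality with
   lam = 3 r / q, q = 24 |J2| ||b||^2 / m1, and e <= 3 give the bound, even
   without the factor C_hg ^ (|J1| / 2), so C_hg = 2 works. *)

Section ColumnReplacement.
Variables m1 m2 : nat.
Implicit Types (A : 'M[bool]_(m1, m2)) (j : 'I_m2) (S T : {set 'I_m1}).

Definition set_col A j S : 'M[bool]_(m1, m2) :=
  \matrix_(i, j') if j' == j then i \in S else A i j'.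

Lemma col_supp_set_col A j S : col_supp (set_col A j S) j = S.
Proof. by apply/setP => i; rewrite !inE mxE eqxx. Qed.

Lemma col_supp_set_col_neq A j S j' :
  j' != j -> col_supp (set_col A j S) j' = col_supp A j'.
Proof. by move=> /negbTE ne; apply/setP => i; rewrite !inE mxE ne. Qed.

Lemma set_colK A j S T : set_col (set_col A j S) j T = set_col A j T.
Proof. by apply/matrixP => i j'; rewrite !mxE; case: eqP. Qed.

Lemma set_col_id A j S : (set_col A j S == A) = (col_supp A j == S).
Proof.
apply/eqP/eqP => [<-|<-]; first by rewrite col_supp_set_col.
by apply/matrixP => i j'; rewrite !mxE; case: eqP => // ->; rewrite inE.
Qed.

Lemma Omega_col_supp (b : 'I_m2 -> nat) A j : Omega_b b A -> #|col_supp A j| = b j.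
Proof. by move=> /forallP /(_ j) /eqP. Qed.

Lemma Omega_set_col (b : 'I_m2 -> nat) A j S :
  #|col_supp A j| = b j -> #|S| = b j ->
  Omega_b b (set_col A j S) = Omega_b b A.
Proof.
move=> hA hS; apply/forallP/forallP => h j'.
  have [->|ne] := eqVneq j' j; first by rewrite hA.
  by have := h j'; rewrite col_supp_set_col_neq.
have [->|ne] := eqVneq j' j; first by rewrite col_supp_set_col hS.
by rewrite col_supp_set_col_neq.
Qed.

(* This
   is the counting form of "column j is uniform and independent of the others
   conditionally on Omega_b". *)
Lemma sum_Omega_resample (R : nmodType) (b : 'I_m2 -> nat)
    (G : 'M[bool]_(m1, m2) -> R) j :
  \sum_(A | Omega_b b A) G A *+ #|[set S : {set 'I_m1} | #|S| == b j]| =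
  \sum_(A | Omega_b b A) \sum_(S in [set S : {set 'I_m1} | #|S| == b j]) G (set_col A j S).
Proof.
set P := [set S : {set 'I_m1} | #|S| == b j].
have colP A : Omega_b b A -> col_supp A j \in P.
  by move=> hA; rewrite inE (Omega_col_supp _ hA).
(* Moving the j-th column from T to S is a bijection between the matrices of
   Omega_b with j-th column T and those with j-th column S. *)
have shift S T : S \in P -> T \in P ->
  \sum_(A | Omega_b b A && (col_supp A j == T)) G (set_col A j S) =
  \sum_(A | Omega_b b A && (col_supp A j == S)) G A.
  rewrite !inE => /eqP hS /eqP hT.
  rewrite (reindex_onto (fun A => set_col A j T) (fun A => set_col A j S)) /=; last first.
    by move=> A /andP[_ /eqP hA]; rewrite set_colK; apply/eqP; rewrite set_col_id hA.
  apply: eq_big => A; last by move=> /andP[_]; rewrite set_colK => /eqP ->.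
  rewrite set_colK col_supp_set_col eqxx andbT set_col_id.
  apply/andP/andP => -[hA /eqP hAS]; split; rewrite ?hAS //.
    by rewrite -(@Omega_set_col b A j T) ?hAS.
  by rewrite Omega_set_col ?hAS.
rewrite exchange_big (partition_big (fun A => col_supp A j) (mem P)) //=.
apply: eq_bigr => S SP.
rewrite [RHS](partition_big (fun A => col_supp A j) (mem P)) //=.
under [RHS]eq_bigr => T TP do rewrite shift //.
by rewrite sumr_const -sumrMnl.
Qed.

End ColumnReplacement.

Lemma sum_subsets_exp (R : comNzRingType) (T : finType) (V : {set T}) (x : R) :
  \sum_(U : {set T} | U \subset V) x ^+ #|U| = (1 + x) ^+ #|V|.
Proof.
rewrite -prodr_const [RHS]big_mkcond /=.
rewrite (eq_bigr (fun i => (if i \in V then x else 0) + 1)); last first.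
  by move=> i _; case: (i \in V); rewrite ?add0r // addrC.
rewrite bigA_distr /= [LHS]big_mkcond /=; apply: eq_bigr => U _.
rewrite -big_mkcond /=; case: ifPn => [sUV|/fintype.subsetPn[i iU iV]].
  by rewrite -prodr_const; apply: eq_bigr => i /(fintype.subsetP sUV) ->.
by rewrite (bigD1 i) //= (negbTE iV) mul0r.
Qed.

Lemma bin_sub_ratio m b u : (u <= b)%N -> (b <= m)%N ->
  ('C(m - u, b - u) * m ^ u <= 'C(m, b) * b ^ u)%N.
Proof.
move=> + bm; elim: u => [|u IH] ub; first by rewrite !subn0 !expn0.
have step := mul_bin_diag (m - u) (b - u.+1).
have [e1 e2] : ((m - u).-1 = m - u.+1 /\ (b - u.+1).+1 = b - u)%N by lia.
rewrite e1 e2 in step.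
have pos : (0 < m - u)%N by lia.
rewrite -(leq_pmul2l pos) !expnS.
set C1 := 'C(m - u.+1, b - u.+1) in step *.
set C0 := 'C(m - u, b - u) in step IH *.
have -> : ((m - u) * (C1 * (m * m ^ u)) = (b - u) * m * (C0 * m ^ u))%N.
  by rewrite mulnA step; lia.
have h : ((b - u) * m <= (m - u) * b)%N by nia.
apply: leq_trans (leq_mul h (IH (ltnW ub))) _.
by rewrite mulnCA mulnA mulnA; lia.
Qed.

Lemma card_supersets (R : realFieldType) m1 (U : {set 'I_m1}) b :
  (b <= m1)%N -> (0 < m1)%N ->
  #|[set S : {set 'I_m1} | (#|S| == b) && (U \subset S)]|%:R <=
  'C(m1, b)%:R * (b%:R / m1%:R) ^+ #|U| :> R.
Proof.
move=> bm m0; set X := [set S | _].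
have [Ub|bU] := leqP #|U| b; last first.
  rewrite (_ : #|X| = 0%N) ?mulr_ge0 ?exprn_ge0 ?divr_ge0 //.
  apply: eq_card0 => S; rewrite !inE; apply/negP => /andP[/eqP hS /subset_leq_card].
  by rewrite hS leqNgt bU.
(* S |-> S :\: U maps X injectively into the (b - |U|)-subsets of ~: U. *)
have inj : {in X &, injective (fun S => S :\: U)}.
  move=> S S'; rewrite !inE => /andP[_ sS] /andP[_ sS'] e.
  rewrite -(finset.setID S U) -(finset.setID S' U).
  by rewrite (finset.setIidPr sS) (finset.setIidPr sS') e.
have cardX : (#|X| <= 'C(m1 - #|U|, b - #|U|))%N.
  rewrite -(card_in_imset inj).
  rewrite (_ : 'C(_, _) =
     #|[set W : {set 'I_m1} | W \subset ~: U & #|W| == (b - #|U|)%N]|); last first.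
    by rewrite cards_draws [#|~: U|]cardsCs finset.setCK card_ord.
  apply/subset_leq_card/fintype.subsetP => _ /imsetP[S + ->].
  rewrite !inE => /andP[/eqP hS sUS]; rewrite cardsD (finset.setIidPr sUS) hS eqxx andbT.
  by apply/fintype.subsetP => i; rewrite !inE => /andP[].
have m0' : 0 < (m1%:R : R) ^+ #|U| by rewrite exprn_gt0 // ltr0n.
rewrite expr_div_n mulrA ler_pdivlMr // -!natrX -!natrM ler_nat.
by apply: leq_trans (bin_sub_ratio Ub bm); rewrite leq_mul2r cardX orbT.
Qed.

(* Exponential moment of a hypergeometric variable: if S is a uniform b-subset
   of [m1], then E[(1 + mu)^|S :&: V|] <= (1 + mu b / m1)^|V|. *)
Lemma hypergeometric_moment (R : realFieldType) m1 (V : {set 'I_m1}) b (mu : R) :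
  0 <= mu -> (b <= m1)%N -> (0 < m1)%N ->
  \sum_(S : {set 'I_m1} | #|S| == b) (1 + mu) ^+ #|S :&: V| <=
  'C(m1, b)%:R * (1 + mu * (b%:R / m1%:R)) ^+ #|V|.
Proof.
move=> mu0 bm m0.
under eq_bigr do rewrite -sum_subsets_exp.
rewrite (exchange_big_dep (fun U : {set 'I_m1} => U \subset V)) /=; last first.
  by move=> S U _ /fintype.subset_trans; apply; apply: finset.subsetIr.
rewrite -sum_subsets_exp big_distrr /=; apply: ler_sum => U UV; rewrite sumr_const.
have -> : #|[pred S : {set 'I_m1} | (#|S| == b) && (U \subset S :&: V)]| =
          #|[set S : {set 'I_m1} | (#|S| == b) && (U \subset S)]|.
  by apply: eq_card => S; rewrite !inE finset.subsetI UV andbT.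
rewrite -[X in X <= _]mulr_natr exprMn mulrCA.
by apply: ler_wpM2l; [exact: exprn_ge0 | exact: card_supersets].
Qed.

Lemma prod_if_card (R : comNzRingType) n (P : pred 'I_n) (x y : R) :
  \prod_(i < n) (if P i then x else y) =
  x ^+ #|[set i | P i]| * y ^+ (n - #|[set i | P i]|).
Proof.
rewrite (bigID P) /= (eq_bigr (fun=> x)) => [|i ->] //.
rewrite [X in _ * X](eq_bigr (fun=> y)) => [|i /negbTE ->] //.
rewrite !prodr_const; congr (x ^+ _ * y ^+ _); first by apply: eq_card => i; rewrite inE.
apply: (@eq_trans _ _ #|~: [set i | P i]|); first by apply: eq_card => i; rewrite !inE.
by rewrite cardsCs finset.setCK card_ord.
Qed.

Lemma bern_weight_Omega (R : realType) m1 m2 (p : R) (b : 'I_m2 -> nat)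
    (A : 'M[bool]_(m1, m2)) :
  Omega_b b A ->
  bern_weight p A = \prod_(j < m2) (p ^+ b j * (1 - p) ^+ (m1 - b j)).
Proof.
move=> /forallP hA; rewrite /bern_weight exchange_big /=.
by apply: eq_bigr => j _; rewrite prod_if_card; have /eqP <- := hA j.
Qed.

Lemma bern_cond_prob_uniform (R : realType) m1 m2 (p : R) (b : 'I_m2 -> nat)
    (E : pred 'M[bool]_(m1, m2)) :
  0 < p < 1 ->
  bern_cond_prob p E (Omega_b b) =
  #|[pred A | E A && Omega_b b A]|%:R / #|@Omega_b m1 m2 b|%:R.
Proof.
move=> /andP[p0 p1].
pose w : R := \prod_(j < m2) (p ^+ b j * (1 - p) ^+ (m1 - b j)).
have w0 : w != 0.
  by rewrite gt_eqF // prodr_gt0 // => j _; rewrite mulr_gt0 // exprn_gt0 // subr_gt0.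
have probE (F : pred 'M[bool]_(m1, m2)) : {subset F <= Omega_b b} ->
    bern_prob p F = w *+ #|F|.
  move=> sF; rewrite /bern_prob -sumr_const; apply: eq_bigr => A /sF.
  exact: bern_weight_Omega.
rewrite /bern_cond_prob !probE //; last by move=> A /andP[].
by rewrite -!(mulr_natr w) invfM mulrACA divff // mul1r.
Qed.

Lemma card_bigcup_le (T I : finType) (P : pred I) (F : I -> {set T}) :
  (#|\bigcup_(i | P i) F i| <= \sum_(i | P i) #|F i|)%N.
Proof.
apply: (big_ind2 (fun (X : {set T}) n => #|X| <= n)%N) => //; first by rewrite cards0.
by move=> X1 n1 X2 n2 h1 h2; apply: leq_trans (leq_card_setU X1 X2) _; apply: leq_add.
Qed.

Section Overlaps.
Variables m1 m2 : nat.
Implicit Types (W K : {set 'I_m2}) (j js : 'I_m2) (A : 'M[bool]_(m1, m2)) (S : {set 'I_m1}).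

Definition covered W K j A : {set 'I_m1} :=
  \bigcup_(j' in W :|: [set j' in K | (j' < j)%N]) col_supp A j'.

Definition overlap W K j A : nat := #|col_supp A j :&: covered W K j A|.

Lemma covered_set_col W K j js A S :
  js \notin W -> (j <= js)%N -> covered W K j (set_col A js S) = covered W K j A.
Proof.
move=> jsW jjs; apply: eq_bigr => j' hj'; apply: col_supp_set_col_neq.
apply: contraTneq hj' => ->; rewrite !inE negb_or jsW /= negb_and.
by rewrite -leqNgt jjs orbT.
Qed.

Lemma covered_setD1 W K j js A :
  (j <= js)%N -> covered W (K :\ js) j A = covered W K j A.
Proof.
move=> jjs; apply: eq_bigl => j'; rewrite !inE; case: (j' \in W) => //=.
by case: eqVneq => [->|] //=; rewrite ltnNge jjs andbF.
Qed.

Lemma card_covered (b : 'I_m2 -> nat) Bn W K j A :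
  Omega_b b A -> (forall i, b i <= Bn)%N ->
  (#|covered W K j A| <= #|W :|: K| * Bn)%N.
Proof.
move=> hA hB; apply: leq_trans (card_bigcup_le _ _) _.
apply: (@leq_trans (\sum_(j' in W :|: [set j' in K | (j' < j)%N]) Bn)).
  by apply: leq_sum => j' _; rewrite (Omega_col_supp _ hA).
rewrite sum_nat_const leq_mul2r; apply/orP; right.
apply/subset_leq_card/fintype.subsetP => x.
by rewrite !inE => /orP[->|/andP[->]]; rewrite ?orbT.
Qed.

(* One resampling step: if the set V of "dangerous" rows and the weight H do
   not depend on column j, then, conditionally on Omega_b, the number of ones
   of column j in V is hypergeometric, and its exponential moment factors out. *)
Lemma resample_column_bound (R : realFieldType) (b : 'I_m2 -> nat) (mu : R) N j
    (V : 'M[bool]_(m1, m2) -> {set 'I_m1}) (H : 'M[bool]_(m1, m2) -> R) :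
  0 <= mu -> (0 < m1)%N -> (b j <= m1)%N ->
  (forall A S, V (set_col A j S) = V A) ->
  (forall A S, H (set_col A j S) = H A) ->
  (forall A, 0 <= H A) ->
  (forall A, Omega_b b A -> #|V A| <= N)%N ->
  \sum_(A | Omega_b b A) (1 + mu) ^+ #|col_supp A j :&: V A| * H A <=
  (1 + mu * ((b j)%:R / m1%:R)) ^+ N * \sum_(A | Omega_b b A) H A.
Proof.
move=> mu0 m0 bm hV hH H0 hN.
set P := [set S : {set 'I_m1} | #|S| == b j].
have cardP : #|P| = 'C(m1, b j) by rewrite card_draws card_ord.
have Ppos : 0 < #|P|%:R :> R by rewrite cardP ltr0n bin_gt0.
set rho := (1 + _) ^+ N.
rewrite -(ler_pM2r Ppos) big_distrl /=.
under eq_bigr do rewrite mulr_natr.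
rewrite sum_Omega_resample -/P mulrAC mulrC big_distrl /=; apply: ler_sum => A hA.
under eq_bigr do rewrite col_supp_set_col hV hH.
rewrite -big_distrl /= mulrC; apply: ler_wpM2l => //; rewrite mulrC cardP.
rewrite (eq_bigl (fun S : {set 'I_m1} => #|S| == b j)); last by move=> S; rewrite inE.
apply: le_trans (hypergeometric_moment _ mu0 bm m0) _.
apply: ler_wpM2l => //; apply: ler_weXn2l; last exact: hN.
by rewrite lerDl mulr_ge0 // divr_ge0.
Qed.

(* Exponential moment of the total overlap of the columns of K: resampling the
   columns of K from the last one to the first, each one contributes a factor
   (1 + mu Bn / m1)^(n Bn). *)
Lemma overlap_moment (R : realFieldType) (b : 'I_m2 -> nat) (Bn n : nat) (mu : R) W K :
  0 <= mu -> (0 < m1)%N -> (forall i, b i <= Bn)%N -> (forall i, b i <= m1)%N ->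
  [disjoint W & K] -> (#|W :|: K| <= n)%N ->
  \sum_(A | Omega_b b A) \prod_(j in K) (1 + mu) ^+ overlap W K j A <=
  ((1 + mu * (Bn%:R / m1%:R)) ^+ (n * Bn)) ^+ #|K| * #|@Omega_b m1 m2 b|%:R.
Proof.
move=> mu0 m0 hB hbm; set rho := _ ^+ (n * Bn).
have [k] := ubnP #|K|; elim: k K => // k IH K /ltnSE cK dWK cWK.
have [->|[j0 j0K]] := set_0Vmem K.
  by under eq_bigr do rewrite big_set0; rewrite cards0 expr0 mul1r sumr_const.
have [js jsK0 jsmax] := @arg_maxnP _ j0 (mem K) val j0K.
have jsK : js \in K := jsK0.
set K' := K :\ js.
have cardK : #|K| = #|K'|.+1 by rewrite (cardsD1 js K) jsK.
have jsW : js \notin W by rewrite (disjointFl dWK jsK).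
have jK'js j : j \in K' -> (j <= js)%N /\ j != js.
  by rewrite !inE => /andP[-> /jsmax].
pose H A := \prod_(j in K') (1 + mu) ^+ overlap W K' j A.
have splitK A : \prod_(j in K) (1 + mu) ^+ overlap W K j A =
                (1 + mu) ^+ #|col_supp A js :&: covered W K js A| * H A.
  rewrite (bigD1 js) //= /H; congr (_ * _); apply: eq_big => [j|j /andP[/jsmax jjs _]].
    by rewrite !inE andbC.
  by rewrite /overlap covered_setD1.
have hH A S : H (set_col A js S) = H A.
  apply: eq_bigr => j /jK'js[jjs ne].
  by rewrite /overlap col_supp_set_col_neq // covered_set_col.
have HIH : \sum_(A | Omega_b b A) H A <= rho ^+ #|K'| * #|@Omega_b m1 m2 b|%:R.
  apply: IH; first by rewrite -ltnS -cardK.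
    by apply: disjointWr dWK; apply: subsetDl.
  by apply: leq_trans cWK; apply/subset_leq_card/finset.setUS/subsetDl.
under eq_bigr do rewrite splitK.
apply: le_trans (resample_column_bound (N := n * Bn) mu0 m0 (hbm js) _ hH _ _) _.
- by move=> A S; apply: covered_set_col.
- by move=> A; apply: prodr_ge0 => j _; apply: exprn_ge0; rewrite addr_ge0.
- move=> A hA; apply: leq_trans (card_covered _ _ _ hA hB) _.
  by rewrite leq_mul2r cWK orbT.
rewrite cardK exprS -mulrA; apply: ler_pM => //.
- by apply: exprn_ge0; rewrite addr_ge0 // mulr_ge0 // divr_ge0.
- by apply: sumr_ge0 => A _; apply: prodr_ge0 => j _; apply: exprn_ge0; rewrite addr_ge0.
apply: lerXn2r; rewrite ?nnegrE ?addr_ge0 ?mulr_ge0 ?divr_ge0 // lerD2l.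
by apply: ler_wpM2l => //; apply: ler_wpM2r; rewrite ?invr_ge0 ?ler0n ?ler_nat.
Qed.
End Overlaps.

Lemma double_count (T U : finType) (D : {pred U}) (P : T -> U -> bool) :
  (\sum_(u in D) #|[set t | P t u]| = \sum_t #|[set u in D | P t u]|)%N.
Proof.
under eq_bigr do rewrite -sum1dep_card.
under [RHS]eq_bigr do rewrite -sum1dep_card.
by rewrite (exchange_big_dep predT).
Qed.

Section DoubleCounting.
Variables m1 m2 : nat.
Variables (A : 'M[bool]_(m1, m2)) (J1 J2 K : {set 'I_m2}).
Hypotheses (sKJ1 : K \subset J1) (sJ12 : J1 \subset J2).

(* In a row i, the ones in the columns of K (a subset of J1) are all overlaps,
   except possibly the first one; and if that first one is the only one in the
   columns of J2, then row i belongs to I_A(J1, J2). *)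
Lemma row_count (i : 'I_m1) :
  (#|[set j in K | A i j]| <=
   2 * #|[set j in K | A i j && (i \in covered (J2 :\: K) K j A)]| +
   (i \in I_A A J1 J2))%N.
Proof.
have sKJ2 := fintype.subset_trans sKJ1 sJ12.
set C := [set j in K | A i j]; set Y := [set j in K | _].
have coveredP (j j' : 'I_m2) : j' \in (J2 :\: K) :|: [set j'' in K | (j'' < j)%N] -> A i j' ->
    i \in covered (J2 :\: K) K j A.
  by move=> hj' Aij'; apply/bigcupP; exists j'; rewrite // inE.
have [iI|iNI] := boolP (i \in I_A A J1 J2).
  (* Then row i has a single one in J2, so at most one in K. *)
  move: (iI); rewrite inE => /existsP[j0 /andP[_ /andP[_ /forallP only_j0]]].
  suff /subset_leq_card : C \subset [set j0] by rewrite cards1; lia.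
  apply/fintype.subsetP => j; rewrite !inE => /andP[jK Aij]; apply/negPn/negP => ne.
  by have := only_j0 j; rewrite (fintype.subsetP sKJ2 _ jK) ne Aij.
have [/existsP[w /andP[wW Aiw]]|noW] := boolP [exists w in J2 :\: K, A i w].
  (* A one in J2 :\: K covers row i for every column of K. *)
  suff /subset_leq_card : C \subset Y by lia.
  apply/fintype.subsetP => j; rewrite !inE => /andP[jK Aij]; rewrite jK Aij /=.
  by apply: coveredP Aiw; rewrite inE wW.
have [->|[j0 j0C]] := set_0Vmem C; first by rewrite cards0.
have [jm jmC0 jmmin] := @arg_minnP _ j0 (mem C) val j0C.
have jmC : jm \in C := jmC0.
move: (jmC); rewrite inE => /andP[jmK Aijm].
(* The ones of row i in K after the first one, jm, are overlaps. *)
have CY : C :\ jm \subset Y.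
  apply/fintype.subsetP => j; rewrite !inE => /andP[ne /andP[jK Aij]]; rewrite jK Aij /=.
  apply: coveredP Aijm; rewrite !inE jmK /= ltn_neqAle jmmin ?inE ?jK ?Aij // andbT.
  by apply: contra ne => /eqP/val_inj ->.
(* Without any overlap, jm would be the only one of row i in J2. *)
have Y0 : (0 < #|Y|)%N.
  rewrite card_gt0; apply: contraNneq iNI => Yempty.
  rewrite inE; apply/existsP; exists jm; rewrite (fintype.subsetP sKJ1 _ jmK) Aijm /=.
  apply/forallP => j; apply/implyP => jJ2; apply/implyP => ne; apply/negP => Aij.
  have [jK|jNK] := boolP (j \in K).
    have : j \in Y by apply: (fintype.subsetP CY); rewrite !inE ne jK Aij.
    by rewrite Yempty inE.
  by move/existsPn/(_ j): noW; rewrite !inE jNK jJ2 Aij.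
by rewrite (cardsD1 jm C) jmC; have := subset_leq_card CY; lia.
Qed.

Lemma sum_col_supp_le :
  (\sum_(j in K) #|col_supp A j| <=
   2 * \sum_(j in K) overlap (J2 :\: K) K j A + #|I_A A J1 J2|)%N.
Proof.
pose Y i := [set j in K | A i j && (i \in covered (J2 :\: K) K j A)].
have -> : (\sum_(j in K) #|col_supp A j| = \sum_i #|[set j in K | A i j]|)%N.
  exact: (double_count K (fun i j => A i j)).
have -> : (\sum_(j in K) overlap (J2 :\: K) K j A = \sum_i #|Y i|)%N.
  rewrite -double_count; apply: eq_bigr => j _.
  by apply: eq_card => i; rewrite !inE.
have -> : #|I_A A J1 J2| = (\sum_i (i \in I_A A J1 J2))%N.
  by rewrite -sum1_card big_mkcond.
rewrite big_distrr -big_split /=; apply: leq_sum => i _; exact: row_count.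
Qed.
End DoubleCounting.

Lemma markov_count (R : realFieldType) (T : finType) (E F : pred T) (f : T -> R) (c : R) :
  (forall x, F x -> 0 <= f x) -> (forall x, E x -> F x -> c <= f x) ->
  c * #|[pred x | E x && F x]|%:R <= \sum_(x | F x) f x.
Proof.
move=> f0 cf; rewrite mulr_natr -sumr_const.
apply: le_trans (_ : \sum_(x | E x && F x) f x <= _).
  by apply: ler_sum => x /andP[]; apply: cf.
rewrite [leRHS](bigID E) /= (eq_bigl (fun x => F x && E x)); last by move=> x; rewrite andbC.
by rewrite lerDl; apply: sumr_ge0 => x /andP[/f0].
Qed.

Lemma overlap_on_bad (R : realFieldType) m1 m2 (b : 'I_m2 -> nat)
    (A : 'M[bool]_(m1, m2)) (J1 J2 K : {set 'I_m2}) (r : R) :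
  Omega_b b A -> K \subset J1 -> J1 \subset J2 -> 0 <= r ->
  (forall j, j \in K -> r <= (b j)%:R) -> #|J1|%:R / 2 <= #|K|%:R :> R ->
  #|I_A A J1 J2|%:R < #|J1|%:R * r / 4 ->
  r * #|J1|%:R / 8 <= (\sum_(j in K) overlap (J2 :\: K) K j A)%:R.
Proof.
move=> hA sKJ1 sJ12 r0 rb hK hI.
have := sum_col_supp_le A sKJ1 sJ12; rewrite -(ler_nat R) natrD natrM natr_sum.
under eq_bigr do rewrite (Omega_col_supp _ hA).
have : #|K|%:R * r <= \sum_(j in K) (b j)%:R :> R.
  by rewrite mulr_natl -sumr_const; apply: ler_sum.
have : #|J1|%:R / 2 * r <= #|K|%:R * r :> R by apply: ler_wpM2r.
lra.
Qed.

Lemma expR_ge_exprD1 (R : realType) (x : R) n :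
  0 <= x -> (1 + x) ^+ n <= expR (n%:R * x).
Proof.
move=> x0; rewrite expRM_natl; apply: lerXn2r; last exact: expR_ge1Dx.
  by rewrite nnegrE addr_ge0.
by rewrite nnegrE expR_ge0.
Qed.

(* Chernoff bound for the bad event: combine Markov's inequality for
   lam ^ (total overlap of K) with overlap_on_bad and overlap_moment. *)
Lemma bad_event_chernoff (R : realType) m1 m2 (b : 'I_m2 -> nat)
    (J1 J2 K : {set 'I_m2}) (r lam : R) :
  (0 < m1)%N -> (forall i, (b i <= m1)%N) -> K \subset J1 -> J1 \subset J2 -> 0 <= r ->
  (forall j, j \in K -> r <= (b j)%:R) -> #|J1|%:R / 2 <= #|K|%:R :> R -> 1 <= lam ->
  expR (r * #|J1|%:R / 8 * ln lam) *
    #|[pred A : 'M[bool]_(m1, m2) |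
       (#|I_A A J1 J2|%:R < #|J1|%:R * r / 4) && Omega_b b A]|%:R <=
  expR (#|K|%:R * (lam - 1) * (#|J2| * bmax b ^ 2)%:R / m1%:R) * #|@Omega_b m1 m2 b|%:R.
Proof.
move=> m0 hbm sKJ1 sJ12 r0 rb hK lam1.
set W := J2 :\: K; set B := bmax b.
have hB i : (b i <= B)%N by apply: leq_bigmax.
have lamP : lam \in Num.pos by rewrite posrE; lra.
pose f (A : 'M[bool]_(m1, m2)) := \prod_(j in K) lam ^+ overlap W K j A.
apply: (@le_trans _ _ (\sum_(A | Omega_b b A) f A)).
  apply: markov_count => [A _|A hI hA].
    by apply: prodr_ge0 => j _; apply: exprn_ge0; lra.
  rewrite /f prodrXr -[lam in leRHS](lnK lamP) -expRM_natl ler_expR.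
  apply: ler_wpM2r; first exact: ln_ge0.
  exact: overlap_on_bad hA sKJ1 sJ12 r0 rb hK hI.
have dWK : [disjoint W & K].
  by rewrite disjoint_subset; apply/fintype.subsetP => j; rewrite !inE => /andP[].
have cWK : (#|W :|: K| <= #|J2|)%N.
  have sKJ2 := fintype.subset_trans sKJ1 sJ12.
  apply/subset_leq_card/fintype.subsetP => j; rewrite !inE.
  by case/orP => [/andP[]//|/(fintype.subsetP sKJ2)].
have mu0 : 0 <= lam - 1 by rewrite subr_ge0.
have := overlap_moment (Bn := B) mu0 m0 hB hbm dWK cWK.
rewrite subrKC => /le_trans; apply; apply: ler_wpM2r => //.
rewrite -exprM; apply: le_trans (expR_ge_exprD1 _ _) _.
  by rewrite mulr_ge0 ?divr_ge0 //; lra.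
by rewrite ler_expR !natrM le_eqVlt; apply/orP; left; apply/eqP; ring.
Qed.

(* e <= 3, i.e. ln 3 >= 1: from e^(-1/6) >= 5/6 and (5/6)^6 >= 1/3. *)
Lemma expR1_le3 (R : realType) : expR (1 : R) <= 3.
Proof.
have h1 : 1 + (- 6^-1) <= expR (- 6^-1 : R) := expR_ge1Dx _.
have h6 : (5 / 6 : R) ^+ 6 <= expR (- 6^-1 : R) ^+ 6.
  by apply: lerXn2r; rewrite ?nnegrE ?expR_ge0 //; apply: le_trans h1; lra.
rewrite -expRM_natl (_ : 6%:R * - 6^-1 = -1 :> R) ?expRN in h6; last by field.
have e0 : 0 < expR (1 : R) := expR_gt0 _.
rewrite -(lef_pV2 (y := expR 1)) ?posrE //; apply: le_trans h6; lra.
Qed.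

(* The exponent arithmetic behind the choice lam = 3 X. *)
Lemma chernoff_exponent (R : realType) (X Z kp t : R) :
  1 <= X -> 0 <= Z -> 0 <= kp -> kp * (3 * X * Z) <= t ->
  kp * (3 * X - 1) * Z <= t * ln (3 * X) + - ln X * t.
Proof.
move=> X1 Z0 kp0 kpt.
have X0 : X \in Num.pos by rewrite posrE; lra.
have ln3 : 1 <= ln (3 : R).
  by rewrite -[leLHS](expRK 1) ler_ln ?posrE ?expR_gt0 ?expR1_le3.
have t0 : 0 <= t by apply: le_trans kpt; rewrite !mulr_ge0 //; lra.
have : t <= t * ln (3 : R) by rewrite ler_peMr.
have : kp * (3 * X - 1) * Z <= kp * (3 * X * Z).
  by rewrite -mulrA ler_wpM2l // ler_wpM2r //; lra.
rewrite lnM ?posrE //; lra.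
Qed.

(* Counting form of the theorem: the Chernoff bound with lam = 3 r / q, where
   q = 24 |J2| ||b||^2 / m1. *)
Lemma count_tail (R : realType) m1 m2 (b : 'I_m2 -> nat) (J1 J2 : {set 'I_m2}) (r : R) :
  (forall i, (b i <= m1)%N) -> J1 != finset.set0 -> J1 \subset J2 -> 0 < r ->
  #|J1|%:R / 2 <= #|[set j in J1 | r <= (b j)%:R]|%:R :> R ->
  #|J2|%:R * (24 * (bmax b)%:R ^+ 2 / m1%:R) <= r ->
  #|[pred A : 'M[bool]_(m1, m2) |
     (#|I_A A J1 J2|%:R < #|J1|%:R * r / 4) && Omega_b b A]|%:R <=
  #|@Omega_b m1 m2 b|%:R *
    expR (- ln (r / (24 * #|J2|%:R * (bmax b)%:R ^+ 2 / m1%:R)) * (r * #|J1|%:R / 8)).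
Proof.
move=> hbm hJ1 sJ12 r0 hK hq.
set K := [set j in J1 | r <= (b j)%:R] in hK *.
set Z : R := (#|J2| * bmax b ^ 2)%:R / m1%:R.
set X := r / _; set t := r * #|J1|%:R / 8.
have sKJ1 : K \subset J1 by apply/fintype.subsetP => j; rewrite inE => /andP[].
have rb j : j \in K -> r <= (b j)%:R by rewrite inE => /andP[].
(* K is not empty, hence r <= ||b|| <= m1 and all parameters are positive. *)
have [j1 j1K] : exists j, j \in K.
  apply/card_gt0P; rewrite -(ltr0n R); apply: lt_le_trans hK.
  by rewrite divr_gt0 // ltr0n card_gt0.
have rB : r <= (bmax b)%:R.
  by apply: le_trans (rb _ j1K) _; rewrite ler_nat; apply: leq_bigmax.
have m0 : (0 < m1)%N.
  rewrite -(ltr0n R); apply: lt_le_trans r0 (le_trans rB _).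
  by rewrite ler_nat; apply/bigmax_leqP => i _.
have n20 : (0 < #|J2|)%N by apply: leq_trans (subset_leq_card sJ12); rewrite card_gt0.
have B0 : (0 < bmax b)%N by rewrite -(ltr0n R); lra.
have Z0 : 0 < Z by rewrite /Z divr_gt0 ?ltr0n ?muln_gt0 ?n20 ?expn_gt0 ?B0.
have qZ : 24 * #|J2|%:R * (bmax b)%:R ^+ 2 / m1%:R = 24 * Z :> R.
  by rewrite /Z natrM natrX; ring.
have X1 : 1 <= X by rewrite /X qZ ler_pdivlMr ?mul1r; [rewrite -qZ; lra | lra].
have XZ : 3 * X * Z = r / 8 by rewrite /X qZ; field; rewrite gt_eqF.
have lam1 : 1 <= 3 * X by lra.
have := bad_event_chernoff m0 hbm sKJ1 sJ12 (ltW r0) rb hK lam1.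
have -> : #|K|%:R * (3 * X - 1) * (#|J2| * bmax b ^ 2)%:R / m1%:R =
          #|K|%:R * (3 * X - 1) * Z by rewrite /Z [RHS]mulrA.
rewrite -/t => chernoff; rewrite -(ler_pM2l (expR_gt0 (t * ln (3 * X)))).
apply: le_trans chernoff _; rewrite [leRHS]mulrCA -expRD [leLHS]mulrC.
apply: ler_wpM2l => //; rewrite ler_expR.
apply: chernoff_exponent; rewrite ?ler0n ?XZ //; first exact: ltW.
have : #|K|%:R <= #|J1|%:R :> R by rewrite ler_nat subset_leq_card.
rewrite /t; nra.
Qed.

Unset Implicit Arguments.

Theorem lemma4p7 (R : realType) :
  exists C_hg : R, 1 < C_hg /\
  forall (m1 m2 : nat) (p : R) (b : 'I_m2 -> nat)
         (J1 J2 : {set 'I_m2}) (r : R),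
    0 < p < 1 ->
    (forall i, (b i <= m1)%N) ->
    J1 != finset.set0 -> J1 \subset J2 ->
    0 < r ->
    (#|J1|%:R / 2 <= #|[set j in J1 | r <= (b j)%:R]|%:R :> R) ->
    #|J2|%:R * (24 * (bmax b)%:R ^+ 2 / m1%:R) <= r ->
    bern_cond_prob p
      [pred A : 'M[bool]_(m1, m2) | #|I_A A J1 J2|%:R < #|J1|%:R * r / 4]
      (@Omega_b m1 m2 b)
    <= C_hg `^ (#|J1|%:R / 2) *
       expR (- ln (r / (24 * #|J2|%:R * (bmax b)%:R ^+ 2 / m1%:R))
               * (r * #|J1|%:R / 8)).
Proof.
exists 2; split; first lra.
move=> m1 m2 p b J1 J2 r p01 hbm hJ1 hJ12 r0 hK hq.
have tail := count_tail hbm hJ1 hJ12 r0 hK hq.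
have C1 : 1 <= 2 `^ (#|J1|%:R / 2) :> R.
  by rewrite -[leLHS](powRr0 2) ler_powR ?divr_ge0 ?ler0n //; lra.
apply: le_trans (ler_peMl (expR_ge0 _) C1).
rewrite bern_cond_prob_uniform //.
have [->|NO0] := eqVneq (#|@Omega_b m1 m2 b|%:R : R) 0.
  by rewrite invr0 mulr0 expR_ge0.
by rewrite ler_pdivrMr ?lt0r ?NO0 ?ler0n // [leRHS]mulrC.
Qed.
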